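(* (i) Let $\|\cdot\|$ be a URTC-norm on $\mathbb{R}^2$ with unit sphere $S$. If $a,b,c,d\in S$ satisfy $\|a-d\|=\|b-c\|=1$ and the 6-tuple $(a-d,a,b,c,d,d-a)$ is positively oriented, then $a=b$ and $c=d$. (ii) Let $\|\cdot\|$ be an arbitrary norm on $\mathbb{R}^2$, let $a,b\in\mathbb{R}^2$ with $\gamma:=\|a-b\|>0$, and let $\alpha,\beta\ge 0$ satisfy $|\beta-\gamma|\le\alpha\le\beta+\gamma$. Then there exists $c\in\mathbb{R}^2$ with $\|a-c\|=\beta$ and $\|b-c\|=\alpha$.
   Context: A norm $\|\cdot\|$ on $\mathbb{R}^2$ is called a URTC-norm if for every $a,b\in\mathbb{R}^2$ with $\|a-b\|=1$ the system $\|a-x\|=1$, $\|b-x\|=1$ is satisfied by exactly two points $x\in\mathbb{R}^2$. $S=\{x:\|x\|=1\}$ is the unit sphere (a closed convex curve around $0$). A tuple of points of $S$ is positively oriented if the points appear in this order (not necessarily distinct) when traversing $S$ counterclockwise from the first to the last point of the tuple (here $a-d$ and $d-a$ are antipodal points of $S$, so the tuple lies on a half of $S$). *)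

From Stdlib Require Import Reals List.
Open Scope R_scope.

Definition pt := (R * R)%type.
Definition vadd (x y : pt) : pt := (fst x + fst y, snd x + snd y).
Definition vsub (x y : pt) : pt := (fst x - fst y, snd x - snd y).
Definition vscal (t : R) (x : pt) : pt := (t * fst x, t * snd x).
Definition vzero : pt := (0, 0).

Definition is_norm (N : pt -> R) : Prop :=
  (forall x, N x = 0 -> x = vzero) /\
  (forall t x, N (vscal t x) = Rabs t * N x) /\
  (forall x y, N (vadd x y) <= N x + N y).

Definition URTC (N : pt -> R) : Prop :=
  is_norm N /\
  forall a b, N (vsub a b) = 1 ->
    exists x y, x <> y /\
      forall z, (N (vsub a z) = 1 /\ N (vsub b z) = 1) <-> (z = x \/ z = y).

Definition on_sphere (N : pt -> R) (x : pt) : Prop := N x = 1.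

Definition on_ray (p : pt) (t : R) : Prop :=
  exists r, 0 < r /\ p = (r * cos t, r * sin t).

(* A tuple (list) of nonzero points is positively oriented if, traversing
   counterclockwise (less than a full turn) from the first point to the last,
   the points appear in the listed order (repetitions allowed): there are
   nondecreasing angles t_0 <= ... <= t_{n-1} with t_{n-1} < t_0 + 2 PI and
   the i-th point in direction t_i. *)
Definition pos_oriented (l : list pt) : Prop :=
  exists t : nat -> R,
    (forall i, (S i < length l)%nat -> t i <= t (S i)) /\
    t (length l - 1)%nat < t O + 2 * PI /\
    (forall i, (i < length l)%nat -> on_ray (nth i l vzero) (t i)).

(* (ii): let u(t) be the unit vector in the direction of a - b rotated by the
   angle t and put c(t) = a - beta u(t).  Then ||a - c(t)|| = beta, while
   ||b - c(t)|| depends continuously on t and equals |beta - gamma| at t = 0 and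
   beta + gamma at t = pi, so the intermediate value theorem gives the point.

   (i): in any normed plane, the distance from a unit vector x to a unit vector
   z grows as z moves along the sphere from x to -x.  Applied in both directions
   around the half-turn from a - d to d - a this squeezes ||b - d|| to 1.  Then
   c, d and b - c all lie on the unit spheres centred at 0 and at b; by the
   URTC property there are only two such points, and b - c equals neither c
   (it would make ||b|| = 2) nor d (it would reverse the orientation of (c, d)),
   so c = d.  The same argument around c gives a = b. *)

From Stdlib Require Import Reals List Lra Lia Classical.
Import ListNotations.
Open Scope R_scope.

Ltac vec_eq := unfold vsub, vadd, vscal, vzero; simpl; f_equal; first [ring | field].

Section NormBasics.
Variable N : pt -> R.
Hypothesis HN : is_norm N.

Lemma norm_triangle x y : N (vadd x y) <= N x + N y.
Proof. apply HN. Qed.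

Lemma norm_scal t x : N (vscal t x) = Rabs t * N x.
Proof. apply HN. Qed.

Lemma norm_eq0 x : N x = 0 -> x = vzero.
Proof. apply HN. Qed.

Lemma norm_scal_nonneg t x : 0 <= t -> N (vscal t x) = t * N x.
Proof. intro Ht; rewrite norm_scal, Rabs_pos_eq; auto. Qed.

Lemma norm_opp x : N (vscal (-1) x) = N x.
Proof. rewrite norm_scal, Rabs_left by lra; ring. Qed.

Lemma norm_zero : N vzero = 0.
Proof.
  replace vzero with (vscal 0 vzero) by vec_eq.
  rewrite norm_scal_nonneg; lra.
Qed.

Lemma norm_nonneg x : 0 <= N x.
Proof.
  assert (H := norm_triangle x (vscal (-1) x)).
  replace (vadd x (vscal (-1) x)) with vzero in H by vec_eq.
  rewrite norm_zero, norm_opp in H; lra.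
Qed.

Lemma norm_vsub_sym x y : N (vsub x y) = N (vsub y x).
Proof.
  replace (vsub y x) with (vscal (-1) (vsub x y)) by vec_eq.
  now rewrite norm_opp.
Qed.

Lemma norm_vsub0 x : N (vsub vzero x) = N x.
Proof. replace (vsub vzero x) with (vscal (-1) x) by vec_eq; apply norm_opp. Qed.

Lemma norm_le_coords p : N p <= Rabs (fst p) * N (1, 0) + Rabs (snd p) * N (0, 1).
Proof.
  rewrite <- !norm_scal.
  replace p with (vadd (vscal (fst p) (1, 0)) (vscal (snd p) (0, 1))) at 1
    by (destruct p; vec_eq).
  apply norm_triangle.
Qed.

Lemma norm_reverse_triangle p q : Rabs (N p - N q) <= N (vsub p q).
Proof.
  assert (Hp := norm_triangle q (vsub p q)).
  assert (Hq := norm_triangle p (vsub q p)).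
  replace (vadd q (vsub p q)) with p in Hp by (destruct p; vec_eq).
  replace (vadd p (vsub q p)) with q in Hq by (destruct q; vec_eq).
  rewrite (norm_vsub_sym q p) in Hq.
  apply Rabs_le; lra.
Qed.

End NormBasics.

Lemma continuity_pt_dominated (f g : R -> R) x :
  continuity_pt g x -> (forall y, Rabs (f y - f x) <= Rabs (g y - g x)) ->
  continuity_pt f x.
Proof.
  intros Hg Hdom eps Heps.
  destruct (Hg eps Heps) as [delta [Hdelta Hclose]].
  exists delta; split; auto.
  intros y Hy; specialize (Hclose y Hy); simpl in *; unfold R_dist in *.
  eapply Rle_lt_trans; [apply Hdom | exact Hclose].
Qed.

Lemma continuity_norm N f1 f2 : is_norm N -> continuity f1 -> continuity f2 ->
  continuity (fun t => N (f1 t, f2 t)).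
Proof.
  intros HN H1 H2 x.
  set (g y := Rabs (f1 y - f1 x) * N (1, 0) + Rabs (f2 y - f2 x) * N (0, 1)).
  apply (continuity_pt_dominated _ g).
  { unfold g; reg. }
  intro y.
  assert (Hgx : g x = 0) by (unfold g; rewrite !Rminus_diag, Rabs_R0; ring).
  rewrite Hgx, Rminus_0_r, (Rabs_pos_eq (g y)).
  - eapply Rle_trans; [apply (norm_reverse_triangle N HN) | apply (norm_le_coords N HN)].
  - unfold g; generalize (norm_nonneg N HN (1, 0)) (norm_nonneg N HN (0, 1))
      (Rabs_pos (f1 y - f1 x)) (Rabs_pos (f2 y - f2 x)); nra.
Qed.

Definition rotate (t : R) (d : pt) : pt :=
  (cos t * fst d - sin t * snd d, sin t * fst d + cos t * snd d).

Lemma rotate_opp_rotate t d : rotate (-t) (rotate t d) = d.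
Proof.
  unfold rotate; rewrite cos_neg, sin_neg; destruct d as [d1 d2]; simpl.
  f_equal; [transitivity ((Rsqr (sin t) + Rsqr (cos t)) * d1)
            |transitivity ((Rsqr (sin t) + Rsqr (cos t)) * d2)];
    solve [unfold Rsqr; ring | rewrite sin2_cos2; ring].
Qed.

Lemma rotate0 d : rotate 0 d = d.
Proof. unfold rotate; rewrite cos_0, sin_0; destruct d; vec_eq. Qed.

Lemma rotate_PI d : rotate PI d = vscal (-1) d.
Proof. unfold rotate; rewrite cos_PI, sin_PI; vec_eq. Qed.

Lemma norm_rotate_pos N t d : is_norm N -> 0 < N d -> 0 < N (rotate t d).
Proof.
  intros HN Hd.
  destruct (Rle_lt_or_eq_dec _ _ (norm_nonneg N HN (rotate t d))) as [|Hz]; auto.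
  symmetry in Hz; apply (norm_eq0 N HN) in Hz.
  rewrite <- (rotate_opp_rotate t d), Hz in Hd.
  replace (rotate (-t) vzero) with vzero in Hd by (unfold rotate; vec_eq).
  rewrite (norm_zero N HN) in Hd; lra.
Qed.

Lemma continuity_norm_rotate N d : is_norm N -> continuity (fun t => N (rotate t d)).
Proof. intro HN; apply continuity_norm; auto; unfold rotate; simpl; reg. Qed.

Lemma norm_spheres_intersect N a b alpha beta :
  is_norm N -> 0 < N (vsub a b) -> 0 <= beta ->
  Rabs (beta - N (vsub a b)) <= alpha <= beta + N (vsub a b) ->
  exists c, N (vsub a c) = beta /\ N (vsub b c) = alpha.
Proof.
  intros HN Hgam Hbeta Halpha.
  set (d := vsub a b) in *; set (gam := N d) in *.
  set (h t := N (rotate t d)).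
  assert (Hh : forall t, 0 < h t) by (intro; apply norm_rotate_pos; auto).
  assert (Hhc : continuity h) by (apply continuity_norm_rotate; auto).
  set (c t := vsub a (vscal (beta / h t) (rotate t d))).
  assert (Hac : forall t, N (vsub a (c t)) = beta).
  { intro t; unfold c.
    replace (vsub a (vsub a _)) with (vscal (beta / h t) (rotate t d)) by (destruct a; vec_eq).
    rewrite (norm_scal_nonneg N HN) by (apply Rle_mult_inv_pos; auto).
    fold (h t); field; generalize (Hh t); lra. }
  set (f t := N (vsub b (c t)) - alpha).
  assert (Hfc : continuity f).
  { apply continuity_minus; [|apply continuity_const; intros ??; reflexivity].
    assert (Hnz : forall t, h t <> 0) by (intro t; generalize (Hh t); lra).
    apply continuity_norm; auto; unfold c, vsub, vscal, rotate; simpl; reg. }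
  assert (Hf0 : f 0 <= 0).
  { unfold f, c, h; rewrite rotate0; fold gam.
    replace (vsub b (vsub a (vscal (beta / gam) d))) with (vscal ((beta - gam) / gam) d)
      by (unfold d; vec_eq; lra).
    rewrite (norm_scal N HN); fold gam.
    unfold Rdiv; rewrite Rabs_mult, Rabs_inv, (Rabs_pos_eq gam) by lra.
    replace (Rabs (beta - gam) * / gam * gam) with (Rabs (beta - gam)) by (field; lra).
    lra. }
  assert (HfPI : 0 <= f PI).
  { unfold f, c, h; rewrite rotate_PI, (norm_opp N HN); fold gam.
    replace (vsub b (vsub a (vscal (beta / gam) (vscal (-1) d))))
      with (vscal (- ((gam + beta) / gam)) d) by (unfold d; vec_eq; lra).
    rewrite (norm_scal N HN), Rabs_Ropp, Rabs_pos_eq by (apply Rle_mult_inv_pos; lra).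
    fold gam.
    replace ((gam + beta) / gam * gam) with (gam + beta) by (field; lra).
    lra. }
  destruct (IVT_cor f 0 PI Hfc (Rlt_le _ _ PI_RGT_0) ltac:(nra)) as [z [_ Hz]].
  exists (c z); split; [apply Hac | unfold f in Hz; lra].
Qed.

Definition det (u v : pt) : R := fst u * snd v - snd u * fst v.

Lemma det_cramer u v w : det u v <> 0 ->
  w = vsub (vscal (det u w / det u v) v) (vscal (det v w / det u v) u).
Proof. unfold det; intro; destruct w; vec_eq; auto. Qed.

Lemma det_parallel u v : u <> vzero -> det u v = 0 -> exists k, v = vscal k u.
Proof.
  intros Hu Hdet; unfold det in Hdet.
  assert (Hsq : fst u * fst u + snd u * snd u <> 0).
  { intro H; apply Hu; destruct u as [u1 u2]; unfold vzero; simpl in *.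
    f_equal; nra. }
  exists ((fst u * fst v + snd u * snd v) / (fst u * fst u + snd u * snd u)).
  destruct u as [u1 u2], v as [v1 v2]; unfold vscal; simpl in *.
  f_equal; field_simplify_eq; auto.
  - assert (u2 * (u1 * v2 - u2 * v1) = 0) by (rewrite Hdet; ring); lra.
  - assert (u1 * (u1 * v2 - u2 * v1) = 0) by (rewrite Hdet; ring); lra.
Qed.

Section UnitSphere.
Variable N : pt -> R.
Hypothesis HN : is_norm N.

Lemma det_units_eq0 u v : N u = 1 -> N v = 1 -> det u v = 0 ->
  v = u \/ v = vscal (-1) u.
Proof.
  intros Hu Hv Hdet.
  assert (Hu0 : u <> vzero) by (intro E; rewrite E, (norm_zero N HN) in Hu; lra).
  destruct (det_parallel u v Hu0 Hdet) as [k ->].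
  rewrite (norm_scal N HN), Hu in Hv.
  destruct (Rle_or_lt 0 k).
  - rewrite Rabs_pos_eq in Hv by lra; left.
    replace k with 1 by lra; destruct u; vec_eq.
  - rewrite Rabs_left in Hv by lra; right.
    replace k with (-1) by lra; reflexivity.
Qed.

Lemma det_unit_chord_neq0 u v : N u = 1 -> N v = 1 -> N (vsub u v) = 1 -> det u v <> 0.
Proof.
  intros Hu Hv Huv Hdet.
  destruct (det_units_eq0 u v Hu Hv Hdet) as [-> | ->].
  - replace (vsub u u) with vzero in Huv by (destruct u; vec_eq).
    rewrite (norm_zero N HN) in Huv; lra.
  - replace (vsub u (vscal (-1) u)) with (vscal 2 u) in Huv by vec_eq.
    rewrite (norm_scal_nonneg N HN), Hu in Huv; lra.
Qed.

Lemma chord_monotone_cone x y z l m :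
  N x = 1 -> N y = 1 -> N z = 1 -> 0 <= l -> 0 <= m ->
  z = vsub (vscal l y) (vscal m x) -> N (vsub y x) <= N (vsub z x).
Proof.
  intros Hx Hy Hz Hl Hm Ez.
  set (D := N (vsub y x)); set (r := N (vsub z x)).
  assert (HD : 0 <= D) by apply (norm_nonneg N HN).
  assert (Hr : 0 <= r) by apply (norm_nonneg N HN).
  assert (Hlm : l <= 1 + m).
  { assert (H := norm_triangle N HN z (vscal m x)).
    replace (vadd z (vscal m x)) with (vscal l y) in H by (rewrite Ez; vec_eq).
    rewrite !(norm_scal_nonneg N HN) in H by lra; rewrite Hx, Hy, Hz in H; lra. }
  assert (Hmr : 1 + m <= l + m * r).
  { assert (H := norm_triangle N HN (vscal l y) (vscal m (vsub z x))).
    replace (vadd (vscal l y) (vscal m (vsub z x))) with (vscal (1 + m) z) in H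
      by (rewrite Ez; vec_eq).
    rewrite !(norm_scal_nonneg N HN) in H by lra; rewrite Hy, Hz in H; unfold r; lra. }
  destruct (Req_dec l 0) as [Hl0 | Hl0].
  - (* [z = -x], the far end of the cone *)
    assert (Hm1 : m = 1).
    { rewrite Ez, Hl0 in Hz.
      replace (vsub (vscal 0 y) (vscal m x)) with (vscal (-1) (vscal m x)) in Hz by vec_eq.
      rewrite (norm_opp N HN), (norm_scal_nonneg N HN), Hx in Hz; lra. }
    assert (Hr2 : r = 2).
    { unfold r; replace (vsub z x) with (vscal (-1) (vscal 2 x))
        by (rewrite Ez, Hl0, Hm1; vec_eq).
      rewrite (norm_opp N HN), (norm_scal_nonneg N HN), Hx; lra. }
    assert (H := norm_triangle N HN y (vscal (-1) x)).
    replace (vadd y (vscal (-1) x)) with (vsub y x) in H by vec_eq.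
    rewrite (norm_opp N HN), Hx, Hy in H; fold D in H; lra.
  - set (k := l - m).
    assert (Hk : N (vsub z (vscal k x)) = l * D).
    { replace (vsub z (vscal k x)) with (vscal l (vsub y x)) by (rewrite Ez; unfold k; vec_eq).
      apply (norm_scal_nonneg N HN); lra. }
    destruct (Rle_or_lt 0 k) as [Hk0 | Hk0].
    + (* [z - k x] is a convex combination of [z] and [z - x] *)
      assert (H := norm_triangle N HN (vscal (1 - k) z) (vscal k (vsub z x))).
      replace (vadd (vscal (1 - k) z) (vscal k (vsub z x))) with (vsub z (vscal k x)) in H
        by vec_eq.
      rewrite !(norm_scal_nonneg N HN) in H by (unfold k in *; lra).
      rewrite Hk, Hz in H; fold r in H.
      assert (l * D <= l * r) by (unfold k in *; nra).
      apply (Rmult_le_reg_l l); lra.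
    + (* [m (z - k x)] is a positive combination of [l y] and [z] *)
      assert (H := norm_triangle N HN (vscal (- k) (vscal l y)) (vscal l z)).
      replace (vadd (vscal (- k) (vscal l y)) (vscal l z)) with (vscal m (vsub z (vscal k x)))
        in H by (rewrite Ez; unfold k; vec_eq).
      rewrite !(norm_scal_nonneg N HN) in H by (unfold k in *; lra).
      rewrite Hk, Hy, Hz in H.
      assert (m * D <= m * r) by (unfold k in *; nra).
      apply (Rmult_le_reg_l m); unfold k in *; lra.
Qed.

Lemma chord_monotone x y z :
  N x = 1 -> N y = 1 -> N z = 1 -> det x y <> 0 ->
  0 <= det x y * det x z -> 0 <= det x y * det y z ->
  N (vsub y x) <= N (vsub z x).
Proof.
  intros Hx Hy Hz Hxy Hxz Hyz.
  assert (Hsq : 0 < det x y * det x y) by (apply Rsqr_pos_lt; auto).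
  assert (Hratio : forall p, 0 <= det x y * p -> 0 <= p / det x y).
  { intros p Hp; replace (p / det x y) with (det x y * p / (det x y * det x y)) by (field; auto).
    apply Rle_mult_inv_pos; auto. }
  apply (chord_monotone_cone x y z (det x z / det x y) (det y z / det x y)); auto.
  now apply det_cramer.
Qed.

End UnitSphere.

Lemma urtc_third_point N p q r : URTC N ->
  N p = 1 -> N q = 1 -> N r = 1 -> N (vsub p q) = 1 -> N (vsub p r) = 1 -> q <> r ->
  p = vadd q r.
Proof.
  intros [HN HU] Hp Hq Hr Hpq Hpr Hqr.
  assert (Hp0 : N (vsub p vzero) = 1).
  { replace (vsub p vzero) with p by (destruct p; vec_eq); auto. }
  destruct (HU p vzero Hp0) as [x [y [_ Hxy]]].
  assert (Sq : q = x \/ q = y).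
  { apply Hxy; rewrite (norm_vsub0 N HN); auto. }
  assert (Sr : r = x \/ r = y).
  { apply Hxy; rewrite (norm_vsub0 N HN); auto. }
  (* the reflection [p - q] of [q] through the midpoint of [0, p] is a third solution *)
  assert (Ss : vsub p q = x \/ vsub p q = y).
  { apply Hxy; split.
    - replace (vsub p (vsub p q)) with q by (destruct q; vec_eq); auto.
    - rewrite (norm_vsub0 N HN); auto. }
  assert (Hpq2 : vsub p q <> q).
  { intro E.
    replace p with (vscal 2 q) in Hp
      by (destruct p, q; unfold vsub, vscal in *; simpl in *; injection E; intros; f_equal; lra).
    rewrite (norm_scal_nonneg N HN), Hq in Hp; lra. }
  assert (E : vsub p q = r).
  { destruct Sq, Sr, Ss; congruence. }
  rewrite <- E; destruct p, q; vec_eq.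
Qed.

Lemma det_on_rays p q s u : on_ray p s -> on_ray q u ->
  exists k, 0 < k /\ det p q = k * sin (u - s).
Proof.
  intros [rp [Hrp ->]] [rq [Hrq ->]]; exists (rp * rq); split.
  - now apply Rmult_lt_0_compat.
  - unfold det; simpl; rewrite sin_minus; ring.
Qed.

Lemma nondecreasing_le (t : nat -> R) n :
  (forall i, (S i < n)%nat -> t i <= t (S i)) ->
  forall i j, (i <= j)%nat -> (j < n)%nat -> t i <= t j.
Proof.
  intros Hstep i j Hij Hj; induction Hij as [| j Hij IH]; [lra |].
  apply Rle_trans with (t j); [apply IH; lia | apply Hstep; lia].
Qed.

(* The endpoints have vanishing [det], which rules out an angular span in (pi, 2 pi). *)
Lemma pos_oriented_det_nonneg l i j : pos_oriented l ->
  det (nth 0 l vzero) (nth (length l - 1) l vzero) = 0 ->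
  (i <= j)%nat -> (j < length l)%nat -> 0 <= det (nth i l vzero) (nth j l vzero).
Proof.
  intros [t [Hstep [Hturn Hray]]] Hends Hij Hj.
  assert (Hle := nondecreasing_le t (length l) Hstep).
  assert (Hhalf : t (length l - 1)%nat - t 0%nat <= PI).
  { destruct (Rle_or_lt (t (length l - 1)%nat - t 0%nat) PI) as [| Hgt]; auto.
    destruct (det_on_rays _ _ _ _ (Hray 0%nat ltac:(lia)) (Hray (length l - 1)%nat ltac:(lia)))
      as [k [Hk Hdet]].
    assert (sin (t (length l - 1)%nat - t 0%nat) < 0) by (apply sin_lt_0; lra).
    nra. }
  destruct (det_on_rays _ _ _ _ (Hray i ltac:(lia)) (Hray j Hj)) as [k [Hk ->]].
  apply Rmult_le_pos; [lra |].
  apply sin_ge_0.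
  - assert (t i <= t j) by (apply Hle; lia); lra.
  - assert (t 0%nat <= t i) by (apply Hle; lia).
    assert (t j <= t (length l - 1)%nat) by (apply Hle; lia).
    lra.
Qed.

Lemma urtc_half_turn_quadruple N a b c d : URTC N ->
  N a = 1 -> N b = 1 -> N c = 1 -> N d = 1 -> N (vsub a d) = 1 -> N (vsub b c) = 1 ->
  pos_oriented [vsub a d; a; b; c; d; vsub d a] -> a = b /\ c = d.
Proof.
  intros HU Ha Hb Hc Hd Had Hbc Hor.
  assert (HN : is_norm N) by apply HU.
  assert (Hdet : forall i j, (i <= j <= 4)%nat ->
    0 <= det (nth i [vsub a d; a; b; c; d; vsub d a] vzero)
             (nth j [vsub a d; a; b; c; d; vsub d a] vzero)).
  { intros i j Hij; apply pos_oriented_det_nonneg; simpl; auto; try lia.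
    unfold det; simpl; ring. }
  assert (Dab := Hdet 1%nat 2%nat ltac:(lia)); assert (Dbc := Hdet 2%nat 3%nat ltac:(lia));
  assert (Dcd := Hdet 3%nat 4%nat ltac:(lia)); assert (Dad := Hdet 1%nat 4%nat ltac:(lia));
  assert (Dbd := Hdet 2%nat 4%nat ltac:(lia)); simpl in Dab, Dbc, Dcd, Dad, Dbd.
  assert (Dad' := det_unit_chord_neq0 N HN a d Ha Hd Had).
  assert (Dbc' := det_unit_chord_neq0 N HN b c Hb Hc Hbc).
  assert (Dbd' : det b d <> 0).
  { intro E; destruct (det_units_eq0 N HN b d Hb Hd E) as [-> | ->].
    - assert (det c b = - det b c) by (unfold det; ring); lra.
    - assert (det a (vscal (-1) b) = - det a b) by (unfold det; simpl; ring); lra. }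
  assert (Hbd : N (vsub b d) = 1).
  { assert (H1 : N (vsub c b) <= N (vsub d b))
      by (apply chord_monotone; auto; apply Rmult_le_pos; lra).
    assert (H2 : N (vsub b d) <= N (vsub a d)).
    { apply chord_monotone; auto.
      - intro E; apply Dbd'; unfold det in *; lra.
      - replace (det d b * det d a) with (det b d * det a d) by (unfold det; ring).
        apply Rmult_le_pos; lra.
      - replace (det d b * det b a) with (det b d * det a b) by (unfold det; ring).
        apply Rmult_le_pos; lra. }
    rewrite (norm_vsub_sym N HN c b), (norm_vsub_sym N HN d b) in H1; lra. }
  assert (Hcd : c = d).
  { apply NNPP; intro Hne.
    assert (Hb' := urtc_third_point N b c d HU Hb Hc Hd Hbc Hbd Hne).
    assert (det b c = - det c d) by (rewrite Hb'; unfold det; simpl; ring); lra. }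
  subst d; split; auto.
  apply NNPP; intro Hne.
  rewrite (norm_vsub_sym N HN) in Had, Hbc.
  assert (Hc' := urtc_third_point N c a b HU Hc Ha Hb Had Hbc Hne).
  assert (det b c = - det a b) by (rewrite Hc'; unfold det; simpl; ring); lra.
Qed.

Theorem lemma2 :
  (forall (N : pt -> R) (a b c d : pt),
      URTC N ->
      on_sphere N a -> on_sphere N b -> on_sphere N c -> on_sphere N d ->
      N (vsub a d) = 1 -> N (vsub b c) = 1 ->
      pos_oriented [vsub a d; a; b; c; d; vsub d a] ->
      a = b /\ c = d) /\
  (forall (N : pt -> R) (a b : pt) (alpha beta : R),
      is_norm N ->
      0 < N (vsub a b) ->
      0 <= alpha -> 0 <= beta ->
      Rabs (beta - N (vsub a b)) <= alpha <= beta + N (vsub a b) ->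
      exists c : pt, N (vsub a c) = beta /\ N (vsub b c) = alpha).
Proof.
  split.
  - intros N a b c d; apply urtc_half_turn_quadruple.
  - intros N a b alpha beta HN Hab _; now apply norm_spheres_intersect.
Qed.
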